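(* There exists a (weighted) instance of the atomic two-stage facility location game that admits no subgame perfect equilibrium.
   Context: Atomic two-stage facility location game. An instance is a triple $(H,U,k)$: $H=(V,E,w)$ is a finite directed graph with vertex weights $w:V\to\mathbb{Q}_{>0}$; $F$ is a set of $k$ facility agents; $U:F\to 2^V$ assigns to each facility agent $f$ a set $U(f)\subseteq V$ of feasible locations. The vertices are simultaneously the clients and the possible locations. A facility placement profile (FPP) is a vector $\mathbf{s}=(s_f)_{f\in F}$ with $s_f\in U(f)$ (several facilities may choose the same vertex); $S$ denotes the set of all FPPs. For a client $v$ let $N(v)=\{v\}\cup\{u:(v,u)\in E\}$ and $N_{\mathbf{s}}(v)=\{f\in F: s_f\in N(v)\}$. A client profile for $\mathbf{s}$ is $\sigma(\mathbf{s})$, assigning to each client $v$ numbers $\sigma(\mathbf{s})_{v,f}\in[0,1]$ ($f\in F$) with $\sigma(\mathbf{s})_{v,f}=0$ for $f\notin N_{\mathbf{s}}(v)$ and $\sum_{f\in N_{\mathbf{s}}(v)}\sigma(\mathbf{s})_{v,f}=1$ whenever $N_{\mathbf{s}}(v)\neq\varnothing$. A full client profile $\sigma$ specifies a client profile $\sigma(\mathbf{s}')$ for every $\mathbf{s}'\in S$. The load of facility $f$ is $\ell_f(\mathbf{s},\sigma)=\sum_{v\in V}\sigma(\mathbf{s})_{v,f}w(v)$. The cost of client $v$ is $L_v(\mathbf{s},\sigma)=w(v)+\sum_{f\in N_{\mathbf{s}}(v)}\sigma(\mathbf{s})_{v,f}\,\ell_{-v,f}(\mathbf{s},\sigma)$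 where $\ell_{-v,f}(\mathbf{s},\sigma)=\sum_{u\neq v}\sigma(\mathbf{s})_{u,f}w(u)$. $\sigma(\mathbf{s})$ is a client equilibrium if no client $v$ can strictly decrease $L_v$ by unilaterally changing her own distribution to another feasible one; $\sigma$ is a full client equilibrium if $\sigma(\mathbf{s}')$ is a client equilibrium for every $\mathbf{s}'\in S$. A pair $(\mathbf{s},\sigma)$ is a subgame perfect equilibrium (SPE) if $\sigma$ is a full client equilibrium and there is no facility $f$ and location $s'_f\in U(f)$ with $\ell_f((s'_f,\mathbf{s}_{-f}),\sigma)>\ell_f(\mathbf{s},\sigma)$. *)

From HB Require Import structures.
From mathcomp Require Import all_boot all_order all_algebra.
From mathcomp Require Import reals.
Set Implicit Arguments. Unset Strict Implicit. Unset Printing Implicit Defensive.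
Import Order.TTheory GRing.Theory Num.Theory.
Local Open Scope ring_scope.

Section Game.
(* An instance (H, U, k): H = (V, E, w), facility agents F with k = #|F|. *)
Variables (V F : finType) (E : rel V) (w : V -> rat) (U : F -> {set V}).
Variable R : realType.

Definition FPP := {ffun F -> V}.
Definition feasible (s : FPP) : Prop := forall f, s f \in U f.

Definition nbh (v u : V) : bool := (u == v) || E v u.
Definition Ns (s : FPP) (v : V) : pred F := fun f => nbh v (s f).

(* a client profile for s: p v f = sigma(s)_{v,f} *)
Definition cprofile := V -> F -> R.

Definition valid_row (s : FPP) (v : V) (q : F -> R) : Prop :=
  (forall f, 0 <= q f <= 1) /\
  (forall f, ~~ Ns s v f -> q f = 0) /\
  ((exists f, Ns s v f) -> \sum_(f | Ns s v f) q f = 1).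

Definition valid_profile (s : FPP) (p : cprofile) : Prop :=
  forall v, valid_row s v (p v).

Definition wR (v : V) : R := ratr (w v).

Definition load (p : cprofile) (f : F) : R := \sum_v p v f * wR v.

Definition load_minus (p : cprofile) (v : V) (f : F) : R :=
  \sum_(u | u != v) p u f * wR u.

Definition cost (s : FPP) (p : cprofile) (v : V) : R :=
  wR v + \sum_(f | Ns s v f) p v f * load_minus p v f.

Definition deviate (p : cprofile) (v : V) (q : F -> R) : cprofile :=
  fun u => if u == v then q else p u.

Definition client_equilibrium (s : FPP) (p : cprofile) : Prop :=
  valid_profile s p /\
  forall v (q : F -> R), valid_row s v q ->
    cost s p v <= cost s (deviate p v q) v.

Definition full_profile := FPP -> cprofile.

Definition full_client_equilibrium (sigma : full_profile) : Prop :=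
  forall s', feasible s' -> client_equilibrium s' (sigma s').

Definition move (s : FPP) (f : F) (x : V) : FPP :=
  [ffun g => if g == f then x else s g].

Definition SPE (s : FPP) (sigma : full_profile) : Prop :=
  feasible s /\ full_client_equilibrium sigma /\
  ~ (exists f x, x \in U f /\ load (sigma (move s f x)) f > load (sigma s) f).

End Game.

(* Take four clients 0, 1, 2, 3 of weights 5, 4, 6, 3 with arcs 0->1, 0->2,
   1->2, 1->3, 3->0; facility f0 may open at 0 or 2, facility f1 at 1 or 3.
   The cost of a client is linear in its own distribution, so in a client
   equilibrium it only patronises facilities of minimal residual load.  In each
   of the four placements every client has a facility of strictly minimal
   residual load, hence the client equilibrium is unique and pure, with loads
   (11, 7), (6, 9), (8, 4), (5, 7) for the placements (2, 3), (2, 1), (0, 1),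
   (0, 3).  These form a better-response cycle
   (2, 3) -> (2, 1) -> (0, 1) -> (0, 3) -> (2, 3), so no placement is stable. *)
From HB Require Import structures.
From mathcomp Require Import all_boot all_order all_algebra.
From mathcomp Require Import reals.
From mathcomp Require Import lra.
Import Order.TTheory GRing.Theory Num.Theory.
Local Open Scope ring_scope.
Set Implicit Arguments. Unset Strict Implicit. Unset Printing Implicit Defensive.

Lemma convex_strict_argmin (R : numDomainType) (I : finType) (P : pred I)
    (p c : I -> R) (i0 : I) :
  P i0 -> (forall i, P i -> 0 <= p i) -> \sum_(i | P i) p i = 1 ->
  (forall i, P i -> i != i0 -> c i0 < c i) ->
  \sum_(i | P i) p i * c i <= c i0 ->
  forall i, P i -> p i = (i == i0)%:R.
Proof.
move=> Pi0 p_ge0 p_sum1 c_min avg_le i Pi.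
have excess_ge0 j : P j -> 0 <= p j * (c j - c i0).
  move=> Pj; case: (eqVneq j i0) => [->|ji0]; first by rewrite subrr mulr0.
  by rewrite mulr_ge0 ?p_ge0 // subr_ge0 ltW ?c_min.
have excess_sum0 : \sum_(j | P j) p j * (c j - c i0) = 0.
  apply/eqP; rewrite eq_le sumr_ge0 // andbT.
  under eq_bigr do rewrite mulrBr.
  by rewrite sumrB -mulr_suml p_sum1 mul1r subr_le0.
have p_off j : P j -> j != i0 -> p j = 0.
  move=> Pj ji0; move/eqP: (psumr_eq0P excess_ge0 excess_sum0 Pj).
  by rewrite mulf_eq0 subr_eq0 (gt_eqF (c_min j Pj ji0)) orbF => /eqP.
case: (eqVneq i i0) => [->|ii0]; last by rewrite p_off.
move: p_sum1; rewrite (bigD1 i0) //= big1 ?addr0 // => j /andP[Pj]; exact: p_off.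
Qed.

Section ClientEquilibria.
Variables (V F : finType) (E : rel V) (w : V -> rat) (R : realType).
Implicit Types (s : FPP V F) (p : cprofile V F R).

Lemma load_minusE p v f : load_minus w p v f = load w p f - p v f * wR w R v.
Proof. by rewrite /load (bigD1 v) //= addrC addrK. Qed.

Lemma load_minus_deviate p v q f :
  load_minus w (deviate p v q) v f = load_minus w p v f.
Proof. by apply: eq_bigr => u /negbTE uv; rewrite /deviate uv. Qed.

Lemma valid_row_point s v f :
  Ns E s v f -> valid_row E s v (fun g => (g == f)%:R : R).
Proof.
move=> Nf; split; [|split].
- by move=> g; case: (g == f); rewrite ?lexx ?ler01.
- move=> g Ng; have gf : g != f by apply: contraNneq Ng => ->.
  by rewrite (negbTE gf).
- by move=> _; rewrite (bigD1 f) //= eqxx big1 ?addr0 // => g /andP[_ /negbTE ->].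
Qed.

Lemma cost_deviate_point s p v f : Ns E s v f ->
  cost E w s (deviate p v (fun g => (g == f)%:R)) v = wR w R v + load_minus w p v f.
Proof.
move=> Nf; congr (_ + _); rewrite (bigD1 f) //= big1 ?addr0.
  by rewrite load_minus_deviate /deviate !eqxx mul1r.
by move=> g /andP[_ gf]; rewrite /deviate eqxx (negbTE gf) mul0r.
Qed.

Lemma client_equilibrium_dominant s p v f :
  client_equilibrium E w s p -> Ns E s v f ->
  (forall g, Ns E s v g -> g != f -> load_minus w p v f < load_minus w p v g) ->
  forall g, p v g = (g == f)%:R.
Proof.
move=> [valid_p no_dev] Nf dominant g.
have [p_bnd [p_out p_sum]] := valid_p v.
case Ng: (Ns E s v g); last first.
  have gf : g != f by apply: contraFneq Ng => ->.
  by rewrite p_out ?Ng // (negbTE gf).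
apply: (convex_strict_argmin (P := Ns E s v) (c := load_minus w p v) Nf) => //.
- by move=> h _; case/andP: (p_bnd h).
- by apply: p_sum; exists f.
- have := no_dev v _ (valid_row_point Nf).
  by rewrite cost_deviate_point // /cost lerD2l.
Qed.

Lemma client_equilibrium_unserved s p v g : client_equilibrium E w s p ->
  (forall f, ~~ Ns E s v f) -> p v g = 0.
Proof. by move=> [valid_p _] unserved; have [_ [p_out _]] := valid_p v; apply: p_out. Qed.

Lemma client_equilibrium_bounds s p v g : client_equilibrium E w s p ->
  0 <= p v g <= 1.
Proof. by move=> [valid_p _]; have [-> _] := valid_p v. Qed.

Lemma move_self s f x : move s f x f = x.
Proof. by rewrite ffunE eqxx. Qed.

Lemma move_other s f g x : g != f -> move s f x g = s g.
Proof. by rewrite ffunE => /negbTE ->. Qed.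

Lemma feasible_move (U : F -> {set V}) s f x :
  feasible U s -> x \in U f -> feasible U (move s f x).
Proof. by move=> feas_s Ux g; rewrite ffunE; case: eqP => [->|]. Qed.

Lemma no_SPE_of_improving (U : F -> {set V}) :
  (forall s, feasible U s -> exists f x, x \in U f /\
     forall p p', client_equilibrium E w s p ->
       client_equilibrium E w (move s f x) p' -> load w p f < load w p' f) ->
  forall s (sigma : full_profile V F R), ~ SPE E w U s sigma.
Proof.
move=> improving s sigma [feas_s [eq_sigma no_dev]].
have [f [x [Ux better]]] := improving s feas_s.
apply: no_dev; exists f, x; split => //.
by apply: better; apply: eq_sigma => //; exact: feasible_move.
Qed.

End ClientEquilibria.

Definition v0 : 'I_4 := @Ordinal 4 0 isT.
Definition v1 : 'I_4 := @Ordinal 4 1 isT.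
Definition v2 : 'I_4 := @Ordinal 4 2 isT.
Definition v3 : 'I_4 := @Ordinal 4 3 isT.
Definition f0 : 'I_2 := @Ordinal 2 0 isT.
Definition f1 : 'I_2 := @Ordinal 2 1 isT.

Definition cex_edge : rel 'I_4 := fun v u =>
  match val v, val u with
  | 0, 1 | 0, 2 | 1, 2 | 1, 3 | 3, 0 => true
  | _, _ => false
  end.

Definition cex_weight (v : 'I_4) : rat := [:: 5; 4; 6; 3]`_v.

Definition cex_locations (f : 'I_2) : {set 'I_4} :=
  if f == f0 then [set v0; v2] else [set v1; v3].

Lemma ord2 (f : 'I_2) : f = f0 \/ f = f1.
Proof. by case: f => [[|[|n]] //= lt]; [left|right]; apply: val_inj. Qed.

Lemma ord4 (v : 'I_4) : [\/ v = v0, v = v1, v = v2 | v = v3].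
Proof.
by case: v => [[|[|[|[|n]]]] //= lt];
  [constructor 1|constructor 2|constructor 3|constructor 4]; apply: val_inj.
Qed.

Lemma ord2_other (f g h : 'I_2) : g != f -> h != f -> h = g.
Proof. by case: (ord2 f) (ord2 g) (ord2 h) => -> [] -> [] ->. Qed.

Lemma sum_ord4 (R : nmodType) (G : 'I_4 -> R) :
  \sum_i G i = G v0 + G v1 + G v2 + G v3.
Proof.
rewrite !big_ord_recl big_ord0 addr0 !addrA.
by congr (_ + _ + _ + _); congr G; apply: val_inj.
Qed.

Section Subgames.
Variables (R : realType) (s : FPP 'I_4 'I_2) (p : cprofile 'I_4 'I_2 R).
Hypothesis ce : client_equilibrium cex_edge cex_weight s p.

Lemma cex_wR : (wR cex_weight R v0 = 5%:R) * (wR cex_weight R v1 = 4%:R) *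
  (wR cex_weight R v2 = 6%:R) * (wR cex_weight R v3 = 3%:R).
Proof. by rewrite /wR /cex_weight /= !ratr_nat. Qed.

Lemma cex_loadE f : load cex_weight p f =
  p v0 f * wR cex_weight R v0 + p v1 f * wR cex_weight R v1 +
  p v2 f * wR cex_weight R v2 + p v3 f * wR cex_weight R v3.
Proof. exact: sum_ord4. Qed.

Lemma cex_forced v f g : g != f -> Ns cex_edge s v f ->
  (Ns cex_edge s v g -> load_minus cex_weight p v f < load_minus cex_weight p v g) ->
  p v f = 1 /\ p v g = 0.
Proof.
move=> gf Nf dominant.
have dominant_all h : Ns cex_edge s v h -> h != f ->
    load_minus cex_weight p v f < load_minus cex_weight p v h.
  by move=> Nh hf; move: Nh; rewrite (ord2_other gf hf); exact: dominant.
by rewrite !(client_equilibrium_dominant ce Nf dominant_all) eqxx (negbTE gf).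
Qed.

Ltac forced s_f0 s_f1 :=
  apply: cex_forced => //; rewrite /Ns ?s_f0 ?s_f1 //= => _;
  rewrite !load_minusE !cex_loadE !cex_wR; lra.

Ltac unserved s_f0 s_f1 :=
  let h := fresh "h" in
  split; apply: (client_equilibrium_unserved _ ce) => h;
  case: (ord2 h) => ->; rewrite /Ns ?s_f0 ?s_f1.

Lemma subgame_v2_v3 : s f0 = v2 -> s f1 = v3 ->
  load cex_weight p f0 = 11%:R /\ load cex_weight p f1 = 7%:R.
Proof.
move=> s_f0 s_f1.
have [p00 p01] : p v0 f0 = 1 /\ p v0 f1 = 0 by forced s_f0 s_f1.
have [p20 p21] : p v2 f0 = 1 /\ p v2 f1 = 0 by forced s_f0 s_f1.
have [p31 p30] : p v3 f1 = 1 /\ p v3 f0 = 0 by forced s_f0 s_f1.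
have [p11 p10] : p v1 f1 = 1 /\ p v1 f0 = 0 by forced s_f0 s_f1.
by rewrite !cex_loadE !cex_wR; split; lra.
Qed.

Lemma subgame_v2_v1 : s f0 = v2 -> s f1 = v1 ->
  load cex_weight p f0 = 6%:R /\ load cex_weight p f1 = 9%:R.
Proof.
move=> s_f0 s_f1.
have [p20 p21] : p v2 f0 = 1 /\ p v2 f1 = 0 by forced s_f0 s_f1.
have [p30 p31] : p v3 f0 = 0 /\ p v3 f1 = 0 by unserved s_f0 s_f1.
(* clients 0 and 1 see each other's facilities: 0 is forced by [0 <= p v1 _ <= 1] alone *)
have /andP[? ?] := client_equilibrium_bounds v1 f0 ce.
have /andP[? ?] := client_equilibrium_bounds v1 f1 ce.
have [p01 p00] : p v0 f1 = 1 /\ p v0 f0 = 0 by forced s_f0 s_f1.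
have [p11 p10] : p v1 f1 = 1 /\ p v1 f0 = 0 by forced s_f0 s_f1.
by rewrite !cex_loadE !cex_wR; split; lra.
Qed.

Lemma subgame_v0_v1 : s f0 = v0 -> s f1 = v1 ->
  load cex_weight p f0 = 8%:R /\ load cex_weight p f1 = 4%:R.
Proof.
move=> s_f0 s_f1.
have [p30 p31] : p v3 f0 = 1 /\ p v3 f1 = 0 by forced s_f0 s_f1.
have [p11 p10] : p v1 f1 = 1 /\ p v1 f0 = 0 by forced s_f0 s_f1.
have [p20 p21] : p v2 f0 = 0 /\ p v2 f1 = 0 by unserved s_f0 s_f1.
have [p00 p01] : p v0 f0 = 1 /\ p v0 f1 = 0 by forced s_f0 s_f1.
by rewrite !cex_loadE !cex_wR; split; lra.
Qed.

Lemma subgame_v0_v3 : s f0 = v0 -> s f1 = v3 ->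
  load cex_weight p f0 = 5%:R /\ load cex_weight p f1 = 7%:R.
Proof.
move=> s_f0 s_f1.
have [p00 p01] : p v0 f0 = 1 /\ p v0 f1 = 0 by forced s_f0 s_f1.
have [p11 p10] : p v1 f1 = 1 /\ p v1 f0 = 0 by forced s_f0 s_f1.
have [p20 p21] : p v2 f0 = 0 /\ p v2 f1 = 0 by unserved s_f0 s_f1.
have [p31 p30] : p v3 f1 = 1 /\ p v3 f0 = 0 by forced s_f0 s_f1.
by rewrite !cex_loadE !cex_wR; split; lra.
Qed.

End Subgames.

Lemma cex_improving (R : realType) (s : FPP 'I_4 'I_2) :
  feasible cex_locations s -> exists f x, x \in cex_locations f /\
    forall p p' : cprofile 'I_4 'I_2 R,
      client_equilibrium cex_edge cex_weight s p ->
      client_equilibrium cex_edge cex_weight (move s f x) p' ->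
      load cex_weight p f < load cex_weight p' f.
Proof.
move=> feas_s; move: (feas_s f0) (feas_s f1).
rewrite /cex_locations /= => /set2P[s_f0|s_f0] /set2P[s_f1|s_f1].
- exists f1, v3; split=> [|p p' ce ce']; first by rewrite !inE eqxx orbT.
  have [_ ->] := subgame_v0_v1 ce s_f0 s_f1.
  have moved_f0 : move s f1 v3 f0 = v0 by rewrite move_other.
  have [_ ->] := subgame_v0_v3 ce' moved_f0 (move_self _ _ _).
  by rewrite ltr_nat.
- exists f0, v2; split=> [|p p' ce ce']; first by rewrite !inE eqxx orbT.
  have [-> _] := subgame_v0_v3 ce s_f0 s_f1.
  have moved_f1 : move s f0 v2 f1 = v3 by rewrite move_other.
  have [-> _] := subgame_v2_v3 ce' (move_self _ _ _) moved_f1.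
  by rewrite ltr_nat.
- exists f0, v0; split=> [|p p' ce ce']; first by rewrite !inE eqxx.
  have [-> _] := subgame_v2_v1 ce s_f0 s_f1.
  have moved_f1 : move s f0 v0 f1 = v1 by rewrite move_other.
  have [-> _] := subgame_v0_v1 ce' (move_self _ _ _) moved_f1.
  by rewrite ltr_nat.
- exists f1, v1; split=> [|p p' ce ce']; first by rewrite !inE eqxx.
  have [_ ->] := subgame_v2_v3 ce s_f0 s_f1.
  have moved_f0 : move s f1 v1 f0 = v2 by rewrite move_other.
  have [_ ->] := subgame_v2_v1 ce' moved_f0 (move_self _ _ _).
  by rewrite ltr_nat.
Qed.

Theorem mainTheorem2 :
  exists (V F : finType) (E : rel V) (w : V -> rat) (U : F -> {set V}),
    (forall v, 0 < w v) /\ (forall f, U f != set0) /\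
    forall (R : realType) (s : FPP V F) (sigma : full_profile V F R),
      ~ SPE E w U s sigma.
Proof.
exists 'I_4, 'I_2, cex_edge, cex_weight, cex_locations; split; [|split].
- by move=> v; case: (ord4 v) => ->; rewrite /cex_weight /= ltr0n.
- move=> f; apply/set0Pn; rewrite /cex_locations.
  by case: ifP => _; [exists v0 | exists v1]; rewrite !inE eqxx.
- move=> R; apply: no_SPE_of_improving; exact: cex_improving.
Qed.
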